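(* Let $W=\mathfrak{S}_n$, $\ast=\mathrm{id}$, $w\in I_\ast$, and let $(s_a,s_b,w)$ be a reduced sequence with $|a-b|>1$. Then one of the following holds: (a) $s_aw\ne ws_a$, $s_bs_aws_a\neq s_aws_as_b$, $s_bw\ne ws_b$, $s_as_bws_b\neq s_bws_bs_a$; (b) $s_aw=ws_a$, $s_bs_aw\ne s_aws_b$, $s_bw\neq ws_b$, $s_as_bws_b=s_bws_bs_a$; (c) $s_aw\neq ws_a$, $s_bs_aws_a=s_aws_as_b$, $s_bw=ws_b$, $s_as_bw\neq s_bws_a$; (d) $s_aw=ws_a$, $s_bs_aw=s_aws_b$, $s_bw=ws_b$, $s_as_bw=s_bws_a$.
   Context: $\mathfrak{S}_n$ with $s_i=(i,i+1)$; $I_\ast=\{w\in\mathfrak{S}_n:w^2=1\}$. For a simple transposition $s$ and $w\in I_\ast$: $s\ltimes w=sw$ if $sw=ws$, $s\ltimes w=sws$ otherwise; iterated from the right. $\rho(w)$ is the minimal $k$ with $w=s_{i_1}\ltimes\cdots\ltimes s_{i_k}\ltimes1$. The sequence $(s_a,s_b,w)$ is reduced if $\rho(s_a\ltimes s_b\ltimes w)=\rho(w)+2$. *)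

From mathcomp Require Import all_boot all_fingroup.
Set Implicit Arguments. Unset Strict Implicit. Unset Printing Implicit Defensive.
Local Open Scope group_scope.

(* Paper's product in the symmetric group: (p ⊙ q) = p ∘ q, i.e. apply q first.
   MathComp's [p * q] applies p first, so p ⊙ q := q * p. *)
Definition pcomp (m : nat) (p q : 'S_m) : 'S_m := q * p.
Infix "⊙" := pcomp (at level 40, left associativity).

(* W = S_{n+1} acting on {0,...,n}; simple transpositions s_i = (i, i+1), i < n. *)
Definition s (n i : nat) : 'S_n.+1 := tperm (inord i) (inord i.+1).

Definition invol (m : nat) (w : 'S_m) : bool := w ⊙ w == 1.

Definition ltimes (m : nat) (t w : 'S_m) : 'S_m :=
  if t ⊙ w == w ⊙ t then t ⊙ w else t ⊙ w ⊙ t.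

Definition twword (n : nat) (l : seq nat) : 'S_n.+1 :=
  foldr (fun i x => ltimes (s n i) x) 1 l.

Definition expressible (n : nat) (w : 'S_n.+1) (k : nat) : Prop :=
  exists l : seq nat, [/\ size l = k, all (fun i => i < n) l & w = twword n l].

Definition rho_is (n : nat) (w : 'S_n.+1) (k : nat) : Prop :=
  expressible w k /\ forall j, expressible w j -> k <= j.

Definition reduced (n a b : nat) (w : 'S_n.+1) : Prop :=
  exists k, rho_is w k /\ rho_is (ltimes (s n a) (ltimes (s n b) w)) (k + 2).

(* For commuting involutions x and y, conjugating w by x, or multiplying it
   by x when w commutes with x, does not change whether w commutes with y.  Hence the two facts "s_a commutes
   with w" and "s_b commutes with w" decide every other commutation in the
   list, and the four combinations give the four cases.  Distant simple
   transpositions are disjoint, hence commuting involutions. *)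

From Pilot Require Import Defs.
From mathcomp Require Import all_boot all_fingroup.
From mathcomp Require Import zify.
Local Open Scope group_scope.

Section CommutingInvolutions.

Variable G : groupType.
Implicit Types x y w : G.

Lemma commute_conj_invol x y w : x * x = 1 -> commute x y ->
  commute (x * w * x) y <-> commute w y.
Proof.
move=> xx cxy; rewrite /commute.
have -> : x * w * x * y = x * (w * y) * x by rewrite -!mulgA cxy.
have -> : y * (x * w * x) = x * (y * w) * x by rewrite !mulgA cxy.
by split=> [/mulIg/mulgI | ->].
Qed.

Lemma commute_mulr x y w : commute x y -> commute w x ->
  commute (w * x) y <-> commute w y.
Proof.
move=> cxy cwx; rewrite /commute -mulgA cxy !mulgA.
by split=> [/mulIg | ->].
Qed.

Lemma commuting_involutions_cases x y w :
  x * x = 1 -> y * y = 1 -> commute x y ->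
  [/\ ~ commute w x, ~ commute (x * w * x) y,
      ~ commute w y & ~ commute (y * w * y) x] \/
  [/\ commute w x, ~ commute (w * x) y,
      ~ commute w y & commute (y * w * y) x] \/
  [/\ ~ commute w x, commute (x * w * x) y,
      commute w y & ~ commute (w * y) x] \/
  [/\ commute w x, commute (w * x) y,
      commute w y & commute (w * y) x].
Proof.
move=> xx yy cxy; have cyx := commute_sym cxy.
have conj_x := commute_conj_invol _ _ w xx cxy.
have conj_y := commute_conj_invol _ _ w yy cyx.
have [cwx | /eqP ncwx] := eqVneq (w * x) (x * w);
  have [cwy | /eqP ncwy] := eqVneq (w * y) (y * w).
- have mul_x := commute_mulr _ _ _ cxy cwx; have mul_y := commute_mulr _ _ _ cyx cwy.
  by do 3 right; split=> //; [apply/mul_x | apply/mul_y].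
- have mul_x := commute_mulr _ _ _ cxy cwx.
  by right; left; split=> //; [move/mul_x | apply/conj_y].
- have mul_y := commute_mulr _ _ _ cyx cwy.
  by do 2 right; left; split=> //; [apply/conj_x | move/mul_y].
- by left; split=> //; [move/conj_x | move/conj_y].
Qed.

End CommutingInvolutions.

Lemma tperm_disjoint_commute (T : finType) (x y z t : T) :
  [&& x != z, x != t, y != z & y != t] -> commute (tperm x y) (tperm z t).
Proof.
case/and4P=> xz xt yz yt.
by rewrite /commute conjgC tpermJ !tpermD // eq_sym.
Qed.

Lemma s_invol n i : s n i * s n i = 1.
Proof. exact: tperm2. Qed.

Lemma s_distant_commute n a b : a < n -> b < n -> (a.+1 < b) || (b.+1 < a) ->
  commute (s n a) (s n b).
Proof.
move=> an bn ab; apply: tperm_disjoint_commute.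
have inord_neq i j : i <= n -> j <= n -> i != j -> inord i != inord j :> 'I_n.+1.
  by move=> ? ? ij; apply: contra ij => /eqP/(congr1 val); rewrite /= !inordK // => ->.
by apply/and4P; split; apply: inord_neq; lia.
Qed.

(* Involutivity of w and reducedness are not needed: the case distinction
   holds for every permutation w. *)
Theorem corollary2p15 (n a b : nat) (w : 'S_n.+1) :
  a < n -> b < n -> invol w -> reduced a b w ->
  ((a.+1 < b) || (b.+1 < a)) ->
  let sa := s n a in let sb := s n b in
  [/\ sa ⊙ w <> w ⊙ sa, sb ⊙ sa ⊙ w ⊙ sa <> sa ⊙ w ⊙ sa ⊙ sb,
      sb ⊙ w <> w ⊙ sb & sa ⊙ sb ⊙ w ⊙ sb <> sb ⊙ w ⊙ sb ⊙ sa] \/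
  [/\ sa ⊙ w = w ⊙ sa, sb ⊙ sa ⊙ w <> sa ⊙ w ⊙ sb,
      sb ⊙ w <> w ⊙ sb & sa ⊙ sb ⊙ w ⊙ sb = sb ⊙ w ⊙ sb ⊙ sa] \/
  [/\ sa ⊙ w <> w ⊙ sa, sb ⊙ sa ⊙ w ⊙ sa = sa ⊙ w ⊙ sa ⊙ sb,
      sb ⊙ w = w ⊙ sb & sa ⊙ sb ⊙ w <> sb ⊙ w ⊙ sa] \/
  [/\ sa ⊙ w = w ⊙ sa, sb ⊙ sa ⊙ w = sa ⊙ w ⊙ sb,
      sb ⊙ w = w ⊙ sb & sa ⊙ sb ⊙ w = sb ⊙ w ⊙ sa].
Proof.
move=> an bn _ _ ab sa sb.
have := commuting_involutions_cases _ _ _ w (s_invol n a) (s_invol n b)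
  (s_distant_commute _ _ _ an bn ab).
by rewrite /commute /Defs.pcomp !mulgA.
Qed.
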